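(* Let $K=2$ and suppose that for every horizon $T$ (a multiple of $100$) a valid pair $(\eta,\gamma)=(\eta_T,\gamma_T)$ in the non-trivial regime is chosen. Then there exist a constant $c>0$ and $T_0$ such that for all $T\ge T_0$, WSU-UX run with $(\eta_T,\gamma_T)$ on the two-phase loss sequence satisfies $\mathbb{E}[\mathcal R_T]\ge c\,T^{2/3}$.
   Context: WSU-UX. Fix integers $K\ge 2$ and $T\ge 1$ and hyperparameters $\eta,\gamma$. The pair $(\eta,\gamma)$ is called valid if $\eta,\gamma\in(0,1/2)$ and $\eta K/\gamma\le 1/2$. Given a fixed loss sequence $\ell_t\in[0,1]^K$, WSU-UX sets $\pi_{1,i}=1/K$ and in each round $t$: forms $\tilde\pi_{t,i}=(1-\gamma)\pi_{t,i}+\gamma/K$; draws $I_t$ with $\Pr(I_t=i\mid\mathcal F_{t-1})=\tilde\pi_{t,i}$; sets $\hat\ell_{t,i}=\ell_{t,i}\mathbf 1[I_t=i]/\tilde\pi_{t,i}$; and updates $\pi_{t+1,i}=\pi_{t,i}\bigl(1-\eta(\hat\ell_{t,i}-\sum_{j}\pi_{t,j}\hat\ell_{t,j})\bigr)$; $\mathcal F_t$ is the history generated by $I_1,\dots,I_t$. The regret is $\mathbb{E}[\mathcal R_T]=\mathbb{E}[\sum_{t}\sum_{j}\tilde\pi_{t,j}\ell_{t,j}]-\min_i\sum_t\ell_{t,i}$. Non-trivial regime: $\eta\ge T^{-2/3}$ and $\gamma\le T^{-1/3}$. Two-phase loss sequence ($K=2$, $T$ a multiple of $100$, $T_1=T/100$):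 $\ell_{t,1}=1,\ell_{t,2}=0$ for $1\le t\le T_1$ and $\ell_{t,1}=0,\ell_{t,2}=1$ for $T_1<t\le T$. *)

From Stdlib Require Import Reals Lra Lia.
Open Scope R_scope.

(* Arms are indexed 0..K-1 (arm i of the paper is index i-1); rounds are 1..T.
   A loss sequence is a function  l : nat -> nat -> R,  l t i = loss of arm i at round t. *)

Fixpoint sumK (K : nat) (f : nat -> R) : R :=
  match K with
  | O => 0
  | S k => sumK k f + f k
  end.

Fixpoint minK (K : nat) (f : nat -> R) : R :=
  match K with
  | O => 0
  | S O => f O
  | S k => Rmin (minK k f) (f k)
  end.

Definition valid (K : nat) (eta gamma : R) : Prop :=
  0 < eta < 1/2 /\ 0 < gamma < 1/2 /\ eta * INR K / gamma <= 1/2.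

Definition mix (K : nat) (gamma : R) (pi : nat -> R) (i : nat) : R :=
  (1 - gamma) * pi i + gamma / INR K.

Definition lhat (K : nat) (gamma : R) (l : nat -> nat -> R) (t : nat)
    (pi : nat -> R) (a i : nat) : R :=
  if Nat.eqb i a then l t i / mix K gamma pi i else 0.

Definition wsu_update (K : nat) (eta gamma : R) (l : nat -> nat -> R) (t : nat)
    (pi : nat -> R) (a : nat) : nat -> R :=
  fun i => pi i * (1 - eta * (lhat K gamma l t pi a i
                     - sumK K (fun j => pi j * lhat K gamma l t pi a j))).

(* Expected total loss  E[ sum_{s=t}^{t+n-1} sum_j tilde pi_{s,j} l_{s,j} ]
   of WSU-UX run for n rounds starting at round t with current weights pi;
   the expectation is over the draws I_s ~ tilde pi_s, computed exactly by
   conditioning on each draw. *)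
Fixpoint exp_loss (K : nat) (eta gamma : R) (l : nat -> nat -> R)
    (n t : nat) (pi : nat -> R) : R :=
  match n with
  | O => 0
  | S n' =>
      sumK K (fun j => mix K gamma pi j * l t j)
      + sumK K (fun a => mix K gamma pi a *
                  exp_loss K eta gamma l n' (S t) (wsu_update K eta gamma l t pi a))
  end.

Definition exp_regret (K : nat) (eta gamma : R) (l : nat -> nat -> R) (T : nat) : R :=
  exp_loss K eta gamma l T 1 (fun _ => 1 / INR K)
  - minK K (fun i => sumK T (fun s => l (S s) i)).

Definition two_phase (T : nat) (t i : nat) : R :=
  if Nat.leb t (T / 100) then (if Nat.eqb i 0 then 1 else 0)
  else (if Nat.eqb i 0 then 0 else 1).

(* With two arms the state of WSU-UX is the weight z of the arm that is bad in the first
   phase, and the expected loss of the remaining rounds is bounded below by a potential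
   V_s(z) with V_s(z) <= (loss of round s) + E[V_(s+1)(z')] that vanishes after the last
   round.  In the second phase z follows the mean map z |-> z + eta z (1 - z) on average,
   and V is (1 - gamma) times the loss of this mean trajectory, a convex function of z
   which is about (1 - gamma)(1 - eta)/eta * (- ln z), plus the exploration cost gamma/2
   per round.  In the first phase V is built on the same - ln z term, each round is charged
   1 - gamma/2 - eta, and the strict convexity of - ln adds a variance gain of
   order eta/gamma per round once z is of order gamma.  Over the second half of the first
   phase this is a regret of order eta T / gamma, hence of order T^(2/3) when
   eta >= T^(-2/3) and gamma <= T^(-1/3). *)

From Stdlib Require Import Reals Lra Lia.
Open Scope R_scope.

Lemma sumK_le (K : nat) (f h : nat -> R) :
  (forall j, (j < K)%nat -> f j <= h j) -> sumK K f <= sumK K h.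
Proof.
  induction K as [|K IH]; intros Hfh; simpl; [lra|].
  apply Rplus_le_compat; [apply IH; intros j Hj|]; apply Hfh; lia.
Qed.

Section PotentialMethod.

Variables (K : nat) (eta gamma : R) (l : nat -> nat -> R).
Variable P : (nat -> R) -> Prop.
Hypothesis mix_nonneg : forall p a, P p -> (a < K)%nat -> 0 <= mix K gamma p a.
Hypothesis update_preserves :
  forall t p a, P p -> (a < K)%nat -> P (wsu_update K eta gamma l t p a).

Lemma exp_loss_ge_potential (W : nat -> (nat -> R) -> R) (n t : nat) (p : nat -> R) :
  (forall s q, P q -> (t <= s < t + n)%nat ->
     W s q <= sumK K (fun j => mix K gamma q j * l s j)
              + sumK K (fun a => mix K gamma q a * W (S s) (wsu_update K eta gamma l s q a))) ->
  (forall q, P q -> W (t + n)%nat q <= 0) ->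
  P p -> W t p <= exp_loss K eta gamma l n t p.
Proof.
  revert t p; induction n as [|n IH]; intros t p Hstep Hend Hp; simpl.
  - rewrite Nat.add_0_r in Hend; auto.
  - eapply Rle_trans; [apply Hstep; auto; lia|].
    apply Rplus_le_compat_l, sumK_le; intros a Ha.
    apply Rmult_le_compat_l; [auto|].
    apply IH; auto.
    + intros s q Hq Hs; apply Hstep; auto; lia.
    + replace (S t + n)%nat with (t + S n)%nat by lia; auto.
Qed.

End PotentialMethod.

Definition interior2 (p : nat -> R) : Prop :=
  0 < p 0%nat /\ 0 < p 1%nat /\ p 0%nat + p 1%nat = 1.

Lemma mix2 (g : R) (p : nat -> R) (i : nat) : mix 2 g p i = (1 - g) * p i + g / 2.
Proof. unfold mix; simpl INR; field. Qed.

Lemma wsu_update2_arm0 (e g : R) (l : nat -> nat -> R) (t : nat) (p : nat -> R) :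
  wsu_update 2 e g l t p 0%nat 0%nat
    = p 0%nat * (1 - e * (l t 0%nat / mix 2 g p 0%nat) * (1 - p 0%nat)) /\
  wsu_update 2 e g l t p 0%nat 1%nat
    = p 1%nat * (1 + e * (l t 0%nat / mix 2 g p 0%nat) * p 0%nat).
Proof. unfold wsu_update, lhat; simpl; split; ring. Qed.

Lemma wsu_update2_arm1 (e g : R) (l : nat -> nat -> R) (t : nat) (p : nat -> R) :
  wsu_update 2 e g l t p 1%nat 0%nat
    = p 0%nat * (1 + e * (l t 1%nat / mix 2 g p 1%nat) * p 1%nat) /\
  wsu_update 2 e g l t p 1%nat 1%nat
    = p 1%nat * (1 - e * (l t 1%nat / mix 2 g p 1%nat) * (1 - p 1%nat)).
Proof. unfold wsu_update, lhat; simpl; split; ring. Qed.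

Lemma step_ratio_bound (e g x m : R) :
  0 < e -> 4 * e <= g -> 0 <= x <= 1 -> g / 2 <= m -> 0 <= e * (x / m) <= 1 / 2.
Proof.
  intros He Heg Hx Hm.
  assert (Hxm : x / m <= 2 / g).
  { apply Rmult_le_reg_r with (m * g); [nra|].
    replace (x / m * (m * g)) with (x * g) by (field; lra).
    replace (2 / g * (m * g)) with (2 * m) by (field; lra). nra. }
  assert (0 <= x / m) by (apply Rle_mult_inv_pos; lra).
  split; [apply Rmult_le_pos; lra|].
  apply Rle_trans with (e * (2 / g)); [apply Rmult_le_compat_l; lra|].
  apply Rmult_le_reg_r with g; [lra|].
  replace (e * (2 / g) * g) with (2 * e) by (field; lra). lra.
Qed.

Lemma interior2_update (e g : R) (l : nat -> nat -> R) (t : nat) (p : nat -> R) (a : nat) :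
  0 < e -> 0 < g < 1 -> 4 * e <= g ->
  0 <= l t 0%nat <= 1 -> 0 <= l t 1%nat <= 1 -> (a < 2)%nat ->
  interior2 p -> interior2 (wsu_update 2 e g l t p a).
Proof.
  intros He Hg Heg Hl0 Hl1 Ha [H0 [H1 Hs]]; unfold interior2.
  destruct a as [|[|a]]; [| |lia].
  - destruct (wsu_update2_arm0 e g l t p) as [-> ->].
    pose proof (step_ratio_bound e g (l t 0%nat) (mix 2 g p 0%nat) He Heg Hl0
                  ltac:(rewrite mix2; nra)).
    set (r := e * (l t 0%nat / _)) in *. replace (1 - p 0%nat) with (p 1%nat) by lra.
    repeat split; try apply Rmult_lt_0_compat; nra.
  - destruct (wsu_update2_arm1 e g l t p) as [-> ->].
    pose proof (step_ratio_bound e g (l t 1%nat) (mix 2 g p 1%nat) He Heg Hl1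
                  ltac:(rewrite mix2; nra)).
    set (r := e * (l t 1%nat / _)) in *. replace (1 - p 1%nat) with (p 0%nat) by lra.
    repeat split; try apply Rmult_lt_0_compat; nra.
Qed.

Lemma ln_le_sub_1 (x : R) : 0 < x -> ln x <= x - 1.
Proof.
  intros Hx. rewrite <- (exp_ln x Hx) at 2.
  pose proof (exp_ineq1_le (ln x)); lra.
Qed.

Lemma ln_sub_ln_le (a b : R) : 0 < a -> 0 < b -> ln a - ln b <= a / b - 1.
Proof.
  intros Ha Hb.
  replace a with (b * (a / b)) at 1 by (field; lra).
  rewrite ln_mult by (try apply Rdiv_lt_0_compat; lra).
  pose proof (ln_le_sub_1 (a / b) ltac:(apply Rdiv_lt_0_compat; lra)); lra.
Qed.

Lemma neg_ln_1_sub_ge (w : R) : 0 <= w <= 1 / 2 -> w + w * w / 4 <= - ln (1 - w).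
Proof.
  intros Hw.
  (* apply [ln y <= y - 1] at [y = sqrt (1 - w)] *)
  set (s := sqrt (1 - w)).
  assert (Hs0 : 0 < s) by (apply sqrt_lt_R0; lra).
  assert (Hss : s * s = 1 - w) by (apply sqrt_sqrt; lra).
  rewrite <- Hss, ln_mult by auto.
  pose proof (ln_le_sub_1 s Hs0).
  assert (Hcube : 0 <= (1 - s) * (1 - s) * (1 - s) * (3 + s)) by
    (repeat apply Rmult_le_pos; nra).
  replace w with (1 - s * s) by lra. nra.
Qed.

Definition logistic (e z : R) : R := z + e * z * (1 - z).

Fixpoint logistic_iter (e : R) (s : nat) (z : R) : R :=
  match s with O => z | S s' => logistic_iter e s' (logistic e z) end.

Fixpoint gap_sum (e : R) (N : nat) (z : R) : R :=
  match N with O => 0 | S N' => (1 - z) + gap_sum e N' (logistic e z) end.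

Section Logistic.

Variable e : R.
Hypothesis He : 0 < e < 1.

Lemma logistic_unit (z : R) : 0 <= z <= 1 -> 0 <= logistic e z <= 1.
Proof.
  intros Hz; unfold logistic.
  assert (0 <= (1 - z) * (1 - e * z)) by (apply Rmult_le_pos; nra).
  assert (0 <= e * z * (1 - z)) by (repeat apply Rmult_le_pos; lra).
  split; nra.
Qed.

Lemma logistic_open_unit (z : R) : 0 < z < 1 -> 0 < logistic e z < 1.
Proof.
  intros Hz; unfold logistic.
  assert (0 < (1 - z) * (1 - e * z)) by (apply Rmult_lt_0_compat; nra).
  assert (0 <= e * z * (1 - z)) by (repeat apply Rmult_le_pos; lra).
  split; nra.
Qed.

Lemma logistic_iter_open_unit (s : nat) (z : R) : 0 < z < 1 -> 0 < logistic_iter e s z < 1.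
Proof.
  revert z; induction s as [|s IH]; intros z Hz; simpl; auto.
  apply IH, logistic_open_unit; auto.
Qed.

Lemma logistic_le (a b : R) : 0 <= a <= 1 -> 0 <= b <= 1 -> a <= b -> logistic e a <= logistic e b.
Proof.
  intros Ha Hb Hab; unfold logistic.
  assert (0 <= (b - a) * (1 + e - e * (a + b))) by (apply Rmult_le_pos; nra).
  nra.
Qed.

Lemma logistic_concave (a b lam : R) : 0 <= lam <= 1 ->
  lam * logistic e a + (1 - lam) * logistic e b <= logistic e (lam * a + (1 - lam) * b).
Proof.
  intros Hlam; unfold logistic.
  assert (0 <= e * lam * (1 - lam) * ((a - b) * (a - b))).
  { apply Rmult_le_pos; [|apply Rle_0_sqr]. repeat apply Rmult_le_pos; lra. }
  nra.
Qed.

Lemma gap_sum_antitone (N : nat) (a b : R) :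
  0 <= a <= 1 -> 0 <= b <= 1 -> a <= b -> gap_sum e N b <= gap_sum e N a.
Proof.
  revert a b; induction N as [|N IH]; intros a b Ha Hb Hab; simpl; [lra|].
  pose proof (IH _ _ (logistic_unit a Ha) (logistic_unit b Hb) (logistic_le a b Ha Hb Hab)).
  lra.
Qed.

Lemma gap_sum_convex (N : nat) (a b lam : R) :
  0 <= a <= 1 -> 0 <= b <= 1 -> 0 <= lam <= 1 ->
  gap_sum e N (lam * a + (1 - lam) * b) <= lam * gap_sum e N a + (1 - lam) * gap_sum e N b.
Proof.
  revert a b; induction N as [|N IH]; intros a b Ha Hb Hlam; simpl; [lra|].
  pose proof (logistic_unit a Ha); pose proof (logistic_unit b Hb).
  assert (Hmid : 0 <= lam * logistic e a + (1 - lam) * logistic e b <= 1) by nra.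
  assert (Hc : 0 <= lam * a + (1 - lam) * b <= 1) by nra.
  pose proof (gap_sum_antitone N _ _ Hmid (logistic_unit _ Hc)
                (logistic_concave a b lam Hlam)).
  pose proof (IH (logistic e a) (logistic e b) ltac:(lra) ltac:(lra) Hlam).
  lra.
Qed.

Lemma gap_sum_as_sum (N : nat) (z : R) :
  gap_sum e N z = sumK N (fun s => 1 - logistic_iter e s z).
Proof.
  revert z; induction N as [|N IH]; intros z; simpl; auto.
  rewrite IH; clear IH.
  induction N as [|N IHN]; simpl; [ring|].
  rewrite <- IHN; simpl; ring.
Qed.

Lemma logistic_odds (z : R) : 0 < z < 1 ->
  logistic e z / (1 - logistic e z) * (1 - e) <= z / (1 - z).
Proof.
  intros Hz; unfold logistic.
  assert (Hden : 1 - (z + e * z * (1 - z)) = (1 - z) * (1 - e * z)) by ring.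
  rewrite Hden.
  assert (0 < 1 - e * z) by nra.
  apply Rmult_le_reg_r with ((1 - z) * (1 - e * z)); [apply Rmult_lt_0_compat; lra|].
  replace ((z + e * z * (1 - z)) / ((1 - z) * (1 - e * z)) * (1 - e) * ((1 - z) * (1 - e * z)))
    with ((z + e * z * (1 - z)) * (1 - e)) by (field; lra).
  replace (z / (1 - z) * ((1 - z) * (1 - e * z))) with (z * (1 - e * z)) by (field; lra).
  nra.
Qed.

Lemma logistic_iter_odds (s : nat) (z : R) : 0 < z < 1 ->
  logistic_iter e s z / (1 - logistic_iter e s z) * (1 - e) ^ s <= z / (1 - z).
Proof.
  revert z; induction s as [|s IH]; intros z Hz; simpl; [lra|].
  pose proof (logistic_open_unit z Hz) as Hf.
  pose proof (IH _ Hf).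
  assert (0 <= (1 - e) ^ s) by (apply pow_le; lra).
  eapply Rle_trans; [|apply (logistic_odds z Hz)].
  set (x := logistic_iter e s (logistic e z)) in *.
  replace (x / (1 - x) * ((1 - e) * (1 - e) ^ s)) with (x / (1 - x) * (1 - e) ^ s * (1 - e))
    by ring.
  apply Rmult_le_compat_r; lra.
Qed.

Lemma logistic_iter_gap_ge (s : nat) (z : R) : 0 < z < 1 ->
  1 / (1 + (z / (1 - z)) / (1 - e) ^ s) <= 1 - logistic_iter e s z.
Proof.
  intros Hz.
  pose proof (logistic_iter_open_unit s z Hz) as Hf.
  pose proof (logistic_iter_odds s z Hz) as Ho.
  set (w := logistic_iter e s z) in *; set (d := (1 - e) ^ s) in *.
  assert (Hd : 0 < d) by (apply pow_lt; lra).
  assert (Hw : w / (1 - w) <= (z / (1 - z)) / d).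
  { apply Rmult_le_reg_r with d; auto.
    replace (z / (1 - z) / d * d) with (z / (1 - z)) by (field; lra); lra. }
  replace (1 - w) with (1 / (1 + w / (1 - w))) by (field; lra).
  apply Rmult_le_compat_l; [lra|].
  assert (0 <= w / (1 - w)) by (apply Rle_mult_inv_pos; lra).
  apply Rinv_le_contravar; lra.
Qed.

Lemma log_telescope_step (w : R) : 0 < w ->
  (1 - e) / e * (ln (1 + 1 / w) - ln (1 + (1 - e) / w)) <= 1 / (1 + w).
Proof.
  intros Hw.
  assert (0 < 1 / w) by (apply Rdiv_lt_0_compat; lra).
  assert (0 < (1 - e) / w) by (apply Rdiv_lt_0_compat; lra).
  pose proof (ln_sub_ln_le (1 + 1 / w) (1 + (1 - e) / w) ltac:(lra) ltac:(lra)) as Hln.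
  replace ((1 + 1 / w) / (1 + (1 - e) / w) - 1) with (e / (w + 1 - e)) in Hln by (field; lra).
  apply Rle_trans with ((1 - e) / e * (e / (w + 1 - e))).
  { apply Rmult_le_compat_l; auto. apply Rle_mult_inv_pos; lra. }
  replace ((1 - e) / e * (e / (w + 1 - e))) with ((1 - e) / (w + 1 - e)) by (field; lra).
  apply Rmult_le_reg_r with ((w + 1 - e) * (1 + w)); [apply Rmult_lt_0_compat; lra|].
  replace ((1 - e) / (w + 1 - e) * ((w + 1 - e) * (1 + w))) with ((1 - e) * (1 + w))
    by (field; lra).
  replace (1 / (1 + w) * ((w + 1 - e) * (1 + w))) with (w + 1 - e) by (field; lra).
  nra.
Qed.

Lemma log_telescope (o : R) (N : nat) : 0 < o ->
  (1 - e) / e * (ln (1 + 1 / o) - ln (1 + (1 - e) ^ N / o))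
  <= sumK N (fun s => 1 / (1 + o / (1 - e) ^ s)).
Proof.
  intros Ho; induction N as [|N IH]; simpl; [rewrite Rminus_diag; lra|].
  assert (Hd : 0 < (1 - e) ^ N) by (apply pow_lt; lra).
  pose proof (log_telescope_step (o / (1 - e) ^ N) (Rdiv_lt_0_compat _ _ Ho Hd)) as Hk.
  replace (1 / (o / (1 - e) ^ N)) with ((1 - e) ^ N / o) in Hk by (field; lra).
  replace ((1 - e) / (o / (1 - e) ^ N)) with ((1 - e) * (1 - e) ^ N / o) in Hk by (field; lra).
  lra.
Qed.

Lemma gap_sum_ge (N : nat) (z : R) : 0 < z < 1 ->
  (1 - e) / e * (- ln z - (1 - e) ^ N / z) <= gap_sum e N z.
Proof.
  intros Hz; rewrite gap_sum_as_sum.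
  set (o := z / (1 - z)).
  assert (Ho : 0 < o) by (apply Rdiv_lt_0_compat; lra).
  assert (Hsum : sumK N (fun s => 1 / (1 + o / (1 - e) ^ s))
                 <= sumK N (fun s => 1 - logistic_iter e s z)).
  { apply sumK_le; intros s _; apply logistic_iter_gap_ge; auto. }
  pose proof (log_telescope o N Ho) as Htel.
  replace (1 + 1 / o) with (/ z) in Htel by (unfold o; field; lra).
  rewrite ln_Rinv in Htel by lra.
  assert (Hd : 0 < (1 - e) ^ N) by (apply pow_lt; lra).
  assert (Hlog : ln (1 + (1 - e) ^ N / o) <= (1 - e) ^ N / z).
  { assert (0 < (1 - e) ^ N / o) by (apply Rdiv_lt_0_compat; lra).
    pose proof (ln_le_sub_1 (1 + (1 - e) ^ N / o) ltac:(lra)).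
    replace ((1 - e) ^ N / o) with ((1 - e) ^ N / z * (1 - z)) in * by (unfold o; field; lra).
    assert (0 < (1 - e) ^ N / z) by (apply Rdiv_lt_0_compat; lra). nra. }
  assert (0 <= (1 - e) / e) by (apply Rle_mult_inv_pos; lra).
  assert ((1 - e) / e * (- ln z - (1 - e) ^ N / z)
          <= (1 - e) / e * (- ln z - ln (1 + (1 - e) ^ N / o)))
    by (apply Rmult_le_compat_l; lra).
  lra.
Qed.

End Logistic.

Definition pmix (g z : R) : R := (1 - g) * z + g / 2.

Definition phase1_move (e g z : R) : R := z * (1 - e * ((1 - z) / pmix g z)).

Definition phase2_move (e g z : R) : R := z * (1 + e * ((1 - z) / pmix g (1 - z))).

Definition phase1_pot (A K0 C B D z : R) : R :=
  A * - ln z + K0 + C - B * (z / (1 - z)) - D / z.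

Definition phase2_pot (e g : R) (N : nat) (z : R) : R :=
  (1 - g) * gap_sum e N z + g * INR N / 2.

Section OneStep.

Variables e g z : R.
Hypotheses (He : 0 < e) (Hg : 0 < g < 1 / 2) (Heg : 4 * e <= g) (Hz : 0 < z < 1).

Lemma pmix_ge (x : R) : 0 <= x <= 1 -> g / 2 <= pmix g x.
Proof. intros Hx; unfold pmix; nra. Qed.

Lemma phase1_move_open : 0 < phase1_move e g z < 1.
Proof.
  pose proof (step_ratio_bound e g (1 - z) (pmix g z) He Heg ltac:(lra)
                (pmix_ge z ltac:(lra))).
  unfold phase1_move; nra.
Qed.

Lemma phase1_odds :
  let m := pmix g z in let z' := phase1_move e g z in
  m * (z' / (1 - z')) + (1 - m) * (z / (1 - z)) <= (1 - e / 2) * (z / (1 - z)).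
Proof.
  intros m z'.
  assert (Hm : g / 2 <= m) by (apply pmix_ge; lra).
  assert (Hb : 0 <= e * z / m <= 1).
  { split; [apply Rle_mult_inv_pos; nra|].
    apply Rmult_le_reg_r with m; [lra|].
    replace (e * z / m * m) with (e * z) by (field; lra). unfold m, pmix; nra. }
  assert (Hz' : 1 - z' = (1 - z) * (1 + e * z / m))
    by (unfold z', phase1_move; fold m; field; lra).
  replace (m * (z' / (1 - z')) + (1 - m) * (z / (1 - z)))
    with (z / (1 - z) * (1 - e / (1 + e * z / m)))
    by (rewrite Hz'; unfold z', phase1_move; fold m; field; split; nra).
  rewrite (Rmult_comm (1 - e / 2)).
  apply Rmult_le_compat_l; [apply Rle_mult_inv_pos; lra|].
  assert (e / 2 <= e / (1 + e * z / m))
    by (apply Rmult_le_compat_l; [lra | apply Rinv_le_contravar; lra]).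
  lra.
Qed.

Lemma phase1_inv :
  let m := pmix g z in
  m / phase1_move e g z + (1 - m) / z <= (1 + 2 * e) / z.
Proof.
  intros m.
  pose proof (step_ratio_bound e g (1 - z) m He Heg ltac:(lra) (pmix_ge z ltac:(lra))).
  set (w := e * ((1 - z) / m)) in *.
  assert (Hmw : m * w = e * (1 - z)) by (unfold w, m, pmix; field; nra).
  replace (m / phase1_move e g z + (1 - m) / z) with ((1 + e * (1 - z) / (1 - w)) / z)
    by (unfold phase1_move; fold m w; rewrite <- Hmw; field; lra).
  apply Rmult_le_compat_r; [left; apply Rinv_0_lt_compat; lra|].
  apply Rmult_le_reg_r with (1 - w); [lra|].
  replace ((1 + e * (1 - z) / (1 - w)) * (1 - w)) with (1 - w + e * (1 - z)) by (field; lra).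
  assert (e * (1 - z) <= e) by nra.
  assert (e <= 2 * e * (1 - w)) by nra.
  nra.
Qed.

Lemma phase1_neg_ln :
  let m := pmix g z in
  - ln z + e * (1 - z) + e * e * ((1 - z) * (1 - z) / m) / 4
  <= m * - ln (phase1_move e g z) + (1 - m) * - ln z.
Proof.
  intros m.
  assert (Hm : g / 2 <= m) by (apply pmix_ge; lra).
  pose proof (step_ratio_bound e g (1 - z) m He Heg ltac:(lra) Hm) as Hw.
  set (w := e * ((1 - z) / m)) in *.
  unfold phase1_move; fold m w.
  rewrite ln_mult by lra.
  pose proof (neg_ln_1_sub_ge w Hw).
  assert (Hmw : e * (1 - z) + e * e * ((1 - z) * (1 - z) / m) / 4 = m * (w + w * w / 4))
    by (unfold w; field; lra).
  nra.
Qed.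

(* The gain in [phase1_neg_ln] is of order e / g once z is of order g; when z is
   large the bound is negative and is paid for by the odds term of the potential. *)
Lemma phase1_variance_ge :
  8 / 27 * (1 / g - (z / (1 - z)) / (g * g)) <= (1 - z) * (1 - z) / pmix g z.
Proof.
  set (u := z / (1 - z)); set (m := pmix g z).
  assert (Hm : g / 2 <= m) by (apply pmix_ge; lra).
  assert (0 <= (1 - z) * (1 - z) / m) by (apply Rle_mult_inv_pos; nra).
  destruct (Rle_or_lt g u) as [Hgu|Hgu].
  - replace (1 / g - u / (g * g)) with ((g - u) / (g * g)) by (field; lra).
    assert ((g - u) / (g * g) <= 0).
    { apply Rmult_le_reg_r with (g * g); [nra|].
      replace ((g - u) / (g * g) * (g * g)) with (g - u) by (field; lra); nra. }
    lra.
  - assert (Hzg : z < g * (1 - z)).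
    { unfold u in Hgu. apply Rmult_lt_compat_r with (r := 1 - z) in Hgu; [|lra].
      replace (z / (1 - z) * (1 - z)) with z in Hgu by (field; lra); lra. }
    assert (0 <= u / (g * g)) by (apply Rle_mult_inv_pos; [unfold u; apply Rle_mult_inv_pos|]; nra).
    apply Rle_trans with (8 / (27 * g)).
    { replace (8 / (27 * g)) with (8 / 27 * (1 / g)) by (field; lra); nra. }
    apply Rmult_le_reg_r with (27 * g * m); [nra|].
    replace (8 / (27 * g) * (27 * g * m)) with (8 * m) by (field; lra).
    replace ((1 - z) * (1 - z) / m * (27 * g * m)) with ((1 - z) * (1 - z) * 27 * g)
      by (field; lra).
    assert (1 - z >= 2 / 3) by nra.
    assert (m <= 3 * g / 2) by (unfold m, pmix; nra).
    nra.
Qed.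

Lemma phase1_bonus_le (theta : R) : 0 <= theta <= 1 ->
  theta * (e / (54 * g) - e / (54 * g * g) * (z / (1 - z)))
  <= (1 - g) * (1 - e) * e * ((1 - z) * (1 - z) / pmix g z) / 4.
Proof.
  intros Htheta; pose proof phase1_variance_ge as Hvar.
  set (u := z / (1 - z)) in *; set (G := (1 - z) * (1 - z) / pmix g z) in *.
  assert (HG : 0 <= G) by (apply Rle_mult_inv_pos; [nra | pose proof (pmix_ge z); lra]).
  replace (e / (54 * g) - e / (54 * g * g) * u) with (e / 16 * (8 / 27 * (1 / g - u / (g * g))))
    by (field; lra).
  assert (e / 16 * (8 / 27 * (1 / g - u / (g * g))) <= e / 16 * G)
    by (apply Rmult_le_compat_l; lra).
  assert (theta * (e / 16 * (8 / 27 * (1 / g - u / (g * g)))) <= theta * (e / 16 * G))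
    by (apply Rmult_le_compat_l; lra).
  assert (0 <= e * G) by (apply Rmult_le_pos; lra).
  assert (theta * (e / 16 * G) <= e / 16 * G) by nra.
  assert (1 / 4 <= (1 - g) * (1 - e)) by nra.
  nra.
Qed.

Lemma phase1_step (K0 C B D theta : R) :
  0 <= B -> 0 <= D -> 0 <= theta <= 1 ->
  let A := (1 - g) * (1 - e) / e in
  let m := pmix g z in
  phase1_pot A K0 (C + (1 - g / 2 - e) + theta * (e / (54 * g)))
    ((1 - e / 2) * B + theta * (e / (54 * g * g))) ((1 + 2 * e) * D) z
  <= m + (m * phase1_pot A K0 C B D (phase1_move e g z) + (1 - m) * phase1_pot A K0 C B D z).
Proof.
  intros HB HD Htheta A m.
  pose proof phase1_neg_ln as Hlog; pose proof phase1_odds as Hodds.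
  pose proof phase1_inv as Hinv.
  cbv zeta in Hlog, Hodds, Hinv; fold m in Hlog, Hodds, Hinv.
  set (z' := phase1_move e g z) in *; set (u := z / (1 - z)) in *.
  set (G := (1 - z) * (1 - z) / m) in *.
  assert (HA : 0 <= A) by (unfold A; apply Rle_mult_inv_pos; nra).
  assert (HAe : A * e = (1 - g) * (1 - e)) by (unfold A; field; lra).
  assert (Hm : g / 2 <= m) by (apply pmix_ge; lra).
  assert (HG : 0 <= G) by (unfold G; apply Rle_mult_inv_pos; nra).
  assert (HAlog : A * (- ln z + e * (1 - z) + e * e * G / 4)
                  <= A * (m * - ln z' + (1 - m) * - ln z)) by (apply Rmult_le_compat_l; lra).
  assert (HBodds : B * (m * (z' / (1 - z')) + (1 - m) * u) <= B * ((1 - e / 2) * u))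
    by (apply Rmult_le_compat_l; lra).
  assert (HDinv : D * (m / z' + (1 - m) / z) <= D * ((1 + 2 * e) / z))
    by (apply Rmult_le_compat_l; lra).
  assert (Hgain : theta * (e / (54 * g) - e / (54 * g * g) * u) <= A * (e * e * G / 4)).
  { replace (A * (e * e * G / 4)) with (A * e * e * G / 4) by field; rewrite HAe.
    apply phase1_bonus_le; auto. }
  assert (Hloss : 1 - g / 2 - e <= m + A * (e * (1 - z))).
  { replace (A * (e * (1 - z))) with (A * e * (1 - z)) by ring; rewrite HAe.
    unfold m, pmix. assert (0 <= (1 - g) * e * z) by (repeat apply Rmult_le_pos; lra).
    nra. }
  replace (m * phase1_pot A K0 C B D z' + (1 - m) * phase1_pot A K0 C B D z)
    with (A * (m * - ln z' + (1 - m) * - ln z) + K0 + C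
          - B * (m * (z' / (1 - z')) + (1 - m) * u) - D * (m / z' + (1 - m) / z))
    by (unfold phase1_pot, u, Rdiv; ring).
  unfold phase1_pot; fold u.
  replace (A * (- ln z + e * (1 - z) + e * e * G / 4))
    with (A * - ln z + A * (e * (1 - z)) + A * (e * e * G / 4)) in HAlog by field.
  replace ((1 + 2 * e) * D / z) with (D * ((1 + 2 * e) / z)) by (field; lra).
  nra.
Qed.

Lemma phase2_move_unit : 0 <= phase2_move e g z <= 1.
Proof.
  pose proof (step_ratio_bound e g z (pmix g (1 - z)) He Heg ltac:(lra)
                (pmix_ge (1 - z) ltac:(lra))).
  assert (Hid : 1 - phase2_move e g z = (1 - z) * (1 - e * (z / pmix g (1 - z))))
    by (unfold phase2_move, pmix; field; nra).
  split; [unfold phase2_move; apply Rmult_le_pos; [lra|]|]; nra.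
Qed.

Lemma logistic_as_mean :
  logistic e z = pmix g z * z + (1 - pmix g z) * phase2_move e g z.
Proof.
  assert (Hm : 1 - pmix g z = pmix g (1 - z)) by (unfold pmix; field).
  assert (0 < pmix g (1 - z)) by (unfold pmix; nra).
  rewrite Hm; unfold logistic, phase2_move.
  replace (pmix g z) with (1 - pmix g (1 - z)) by lra.
  field; lra.
Qed.

Lemma phase2_step (N : nat) :
  let m := pmix g (1 - z) in
  phase2_pot e g (S N) z
  <= m + ((1 - m) * phase2_pot e g N z + m * phase2_pot e g N (phase2_move e g z)).
Proof.
  intros m.
  assert (Hm : 1 - m = pmix g z) by (unfold m, pmix; field).
  assert (He1 : 0 < e < 1) by lra.
  pose proof (gap_sum_convex e He1 N z (phase2_move e g z) (pmix g z) ltac:(lra)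
                phase2_move_unit ltac:(unfold pmix; nra)) as Hconv.
  rewrite <- logistic_as_mean, <- Hm in Hconv.
  assert (Hg1 : 0 <= 1 - g) by lra.
  apply (Rmult_le_compat_l _ _ _ Hg1) in Hconv.
  unfold phase2_pot; simpl gap_sum; rewrite S_INR.
  unfold m, pmix in *; nra.
Qed.

End OneStep.

Fixpoint discounted_sum (rho : R) (f : nat -> R) (n s : nat) : R :=
  match n with O => 0 | S n' => f s + rho * discounted_sum rho f n' (S s) end.

Lemma discounted_sum_add (rho : R) (f : nat -> R) (m n s : nat) :
  discounted_sum rho f (m + n) s
  = discounted_sum rho f m s + rho ^ m * discounted_sum rho f n (m + s).
Proof.
  revert s; induction m as [|m IH]; intros s; simpl; [ring|].
  rewrite IH, <- plus_n_Sm; ring.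
Qed.

Lemma discounted_sum_nonneg (rho : R) (f : nat -> R) (n s : nat) :
  0 <= rho -> (forall i, 0 <= f i) -> 0 <= discounted_sum rho f n s.
Proof.
  intros Hrho Hf; revert s; induction n as [|n IH]; intros s; simpl; [lra|].
  pose proof (Hf s); pose proof (IH (S s)); nra.
Qed.

Lemma discounted_sum_le (rho beta : R) (f : nat -> R) (n s : nat) :
  0 <= rho < 1 -> 0 <= beta -> (forall i, f i <= beta) ->
  discounted_sum rho f n s <= beta / (1 - rho).
Proof.
  intros Hrho Hbeta Hf.
  assert (Hgeom : beta / (1 - rho) = beta + rho * (beta / (1 - rho))) by (field; lra).
  assert (0 <= beta / (1 - rho)) by (apply Rle_mult_inv_pos; lra).
  revert s; induction n as [|n IH]; intros s; simpl; [lra|].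
  pose proof (Hf s); pose proof (IH (S s)); nra.
Qed.

Lemma discounted_sum_zero (rho : R) (f : nat -> R) (n s : nat) :
  (forall i, (i < s + n)%nat -> f i = 0) -> discounted_sum rho f n s = 0.
Proof.
  revert s; induction n as [|n IH]; intros s Hf; simpl; [ring|].
  rewrite (Hf s), IH by (try intros; try apply Hf; lia); ring.
Qed.

Lemma discounted_sum_1_ge (c : R) (f : nat -> R) (n s : nat) :
  (forall i, (s <= i)%nat -> c <= f i) -> INR n * c <= discounted_sum 1 f n s.
Proof.
  revert s; induction n as [|n IH]; intros s Hf; cbn [discounted_sum]; [simpl; lra|].
  pose proof (Hf s (le_n s)); pose proof (IH (S s) ltac:(intros; apply Hf; lia)).
  rewrite S_INR; lra.
Qed.

Definition bonus (k i : nat) : R := if Nat.ltb k i then 1 else 0.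

Lemma bonus_unit (k i : nat) : 0 <= bonus k i <= 1.
Proof. unfold bonus; destruct (Nat.ltb k i); lra. Qed.

Definition phase1_potential (e g : R) (T n s : nat) (z : R) : R :=
  let T1 := (T / 100)%nat in
  let A := (1 - g) * (1 - e) / e in
  phase1_pot A (g * INR (T - T1) / 2)
    (discounted_sum 1 (fun i => 1 - g / 2 - e + bonus (T1 / 2) i * (e / (54 * g))) n s)
    (discounted_sum (1 - e / 2) (fun i => bonus (T1 / 2) i * (e / (54 * g * g))) n s)
    ((1 + 2 * e) ^ n * (A * (1 - e) ^ (T - T1))) z.

(* The coefficients of the phase-one potential are accumulated backwards from round T/100,
   and its 1/z coefficient is the one that makes it meet [gap_sum_ge] at the phase boundary.
   The bonus is only collected after round T/200, so that the odds coefficient it creates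
   has decayed by (1 - e/2)^(T/200) at round 1. *)
Definition potential (e g : R) (T s : nat) (z : R) : R :=
  if Nat.leb s (T / 100) then phase1_potential e g T (T / 100 + 1 - s) s z
  else phase2_pot e g (T + 1 - s) z.

Section TwoPhasePotential.

Variables (e g : R) (T : nat).
Hypotheses (He : 0 < e) (Hg : 0 < g < 1 / 2) (Heg : 4 * e <= g).

Lemma phase1_potential_step (n s : nat) (z : R) : 0 < z < 1 ->
  let m := pmix g z in
  phase1_potential e g T (S n) s z
  <= m + (m * phase1_potential e g T n (S s) (phase1_move e g z)
          + (1 - m) * phase1_potential e g T n (S s) z).
Proof.
  intros Hz m; unfold phase1_potential; cbn [discounted_sum].
  set (T1 := (T / 100)%nat).
  set (C := discounted_sum 1 _ n (S s)); set (B := discounted_sum (1 - e / 2) _ n (S s)).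
  set (D := (1 + 2 * e) ^ n * _).
  eapply Rle_trans; [right | apply (phase1_step e g z He Hg Heg Hz _ C B D (bonus (T1 / 2) s))].
  { unfold D; rewrite <- tech_pow_Rmult; f_equal; unfold Rdiv; ring. }
  - apply discounted_sum_nonneg; [lra|]; intros i.
    pose proof (bonus_unit (T1 / 2) i).
    apply Rmult_le_pos; [lra | apply Rle_mult_inv_pos; nra].
  - unfold D; apply Rmult_le_pos; [apply pow_le; lra|].
    apply Rmult_le_pos; [apply Rle_mult_inv_pos; nra | apply pow_le; lra].
  - apply bonus_unit.
Qed.

Lemma phase1_potential_end (s : nat) (z : R) : 0 < z < 1 ->
  phase1_potential e g T 0 s z <= phase2_pot e g (T - T / 100) z.
Proof.
  intros Hz; unfold phase1_potential, phase1_pot, phase2_pot; cbn [discounted_sum pow].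
  set (N := (T - T / 100)%nat).
  pose proof (gap_sum_ge e ltac:(lra) N z Hz) as Hgap.
  assert (Hg1 : 0 <= 1 - g) by lra.
  apply (Rmult_le_compat_l _ _ _ Hg1) in Hgap.
  replace ((1 - g) * ((1 - e) / e * (- ln z - (1 - e) ^ N / z)))
    with ((1 - g) * (1 - e) / e * - ln z - 1 * ((1 - g) * (1 - e) / e * (1 - e) ^ N) / z)
    in Hgap by (field; lra).
  lra.
Qed.

Lemma potential_phase1 (s : nat) (z : R) : (s <= T / 100)%nat ->
  potential e g T s z = phase1_potential e g T (S (T / 100 - s)) s z.
Proof.
  intros Hs; unfold potential; rewrite (proj2 (Nat.leb_le _ _) Hs).
  f_equal; lia.
Qed.

Lemma potential_phase2 (s : nat) (z : R) : (T / 100 < s)%nat ->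
  potential e g T s z = phase2_pot e g (T + 1 - s) z.
Proof. intros Hs; unfold potential; rewrite (proj2 (Nat.leb_gt _ _) Hs); reflexivity. Qed.

Lemma phase1_potential_le_next (s : nat) (z : R) : (s <= T / 100)%nat -> 0 < z < 1 ->
  phase1_potential e g T (T / 100 - s) (S s) z <= potential e g T (S s) z.
Proof.
  intros Hs Hz; destruct (Nat.le_gt_cases (S s) (T / 100)) as [Hn|Hn].
  - rewrite potential_phase1 by lia; right; f_equal; lia.
  - rewrite potential_phase2 by lia.
    replace (T / 100 - s)%nat with 0%nat by lia.
    replace (T + 1 - S s)%nat with (T - T / 100)%nat by lia.
    apply phase1_potential_end; auto.
Qed.

Lemma potential_step_phase1 (s : nat) (z : R) : (s <= T / 100)%nat -> 0 < z < 1 ->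
  let m := pmix g z in
  potential e g T s z
  <= m + (m * potential e g T (S s) (phase1_move e g z) + (1 - m) * potential e g T (S s) z).
Proof.
  intros Hs Hz m; rewrite potential_phase1 by auto.
  eapply Rle_trans; [apply phase1_potential_step; auto|].
  pose proof (phase1_potential_le_next s _ Hs (phase1_move_open e g z He Hg Heg Hz)).
  pose proof (phase1_potential_le_next s z Hs Hz).
  assert (0 <= m <= 1) by (unfold m, pmix; nra).
  fold m; nra.
Qed.

Lemma potential_step_phase2 (s : nat) (z : R) : (T / 100 < s <= T)%nat -> 0 < z < 1 ->
  let m := pmix g (1 - z) in
  potential e g T s z
  <= m + ((1 - m) * potential e g T (S s) z + m * potential e g T (S s) (phase2_move e g z)).
Proof.
  intros Hs Hz m; rewrite !potential_phase2 by lia.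
  replace (T + 1 - s)%nat with (S (T + 1 - S s)) by lia.
  apply phase2_step; auto.
Qed.

End TwoPhasePotential.

Lemma div100_le (T : nat) : (T / 100 <= T)%nat.
Proof. apply Nat.Div0.div_le_upper_bound; lia. Qed.

Lemma two_phase_phase1 (T s : nat) : (s <= T / 100)%nat ->
  two_phase T s 0%nat = 1 /\ two_phase T s 1%nat = 0.
Proof. intros Hs; unfold two_phase; rewrite (proj2 (Nat.leb_le _ _) Hs); auto. Qed.

Lemma two_phase_phase2 (T s : nat) : (T / 100 < s)%nat ->
  two_phase T s 0%nat = 0 /\ two_phase T s 1%nat = 1.
Proof. intros Hs; unfold two_phase; rewrite (proj2 (Nat.leb_gt _ _) Hs); auto. Qed.

Lemma two_phase_unit (T s i : nat) : 0 <= two_phase T s i <= 1.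
Proof. unfold two_phase; destruct (Nat.leb s (T / 100)), (Nat.eqb i 0); lra. Qed.

Lemma two_phase_arm0_total (T n : nat) :
  sumK n (fun s => two_phase T (S s) 0%nat) = INR (Nat.min n (T / 100)).
Proof.
  induction n as [|n IH]; cbn [sumK]; [simpl; lra|].
  rewrite IH; destruct (Nat.le_gt_cases (S n) (T / 100)) as [Hn|Hn].
  - rewrite (proj1 (two_phase_phase1 T _ Hn)).
    replace (Nat.min (S n) (T / 100)) with (S (Nat.min n (T / 100))) by lia.
    rewrite S_INR; lra.
  - rewrite (proj1 (two_phase_phase2 T _ Hn)).
    replace (Nat.min (S n) (T / 100)) with (Nat.min n (T / 100)) by lia; lra.
Qed.

Section TwoPhaseRound.

Variables (e g : R) (T s : nat) (q : nat -> R) (F : R -> R).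
Hypotheses (Hg : 0 < g < 1) (Hq : interior2 q).

Lemma round_phase1 : (s <= T / 100)%nat ->
  let z := q 0%nat in
  sumK 2 (fun j => mix 2 g q j * two_phase T s j)
  + sumK 2 (fun a => mix 2 g q a * F (wsu_update 2 e g (two_phase T) s q a 0%nat))
  = pmix g z + (pmix g z * F (phase1_move e g z) + (1 - pmix g z) * F z).
Proof.
  intros Hs; cbv zeta; destruct Hq as [H0 [H1 H01]].
  destruct (two_phase_phase1 T s Hs) as [L0 L1].
  cbn [sumK]; rewrite (proj1 (wsu_update2_arm0 e g (two_phase T) s q)),
    (proj1 (wsu_update2_arm1 e g (two_phase T) s q)), !mix2, L0, L1.
  set (z := q 0%nat) in *; replace (q 1%nat) with (1 - z) by lra.
  assert (0 < pmix g z) by (unfold pmix; nra).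
  replace (z * (1 - e * (1 / ((1 - g) * z + g / 2)) * (1 - z))) with (phase1_move e g z)
    by (unfold phase1_move, pmix in *; field; lra).
  replace (z * (1 + e * (0 / ((1 - g) * (1 - z) + g / 2)) * (1 - z))) with z
    by (unfold Rdiv; ring).
  unfold pmix; field.
Qed.

Lemma round_phase2 : (T / 100 < s)%nat ->
  let z := q 0%nat in
  sumK 2 (fun j => mix 2 g q j * two_phase T s j)
  + sumK 2 (fun a => mix 2 g q a * F (wsu_update 2 e g (two_phase T) s q a 0%nat))
  = pmix g (1 - z) + ((1 - pmix g (1 - z)) * F z + pmix g (1 - z) * F (phase2_move e g z)).
Proof.
  intros Hs; cbv zeta; destruct Hq as [H0 [H1 H01]].
  destruct (two_phase_phase2 T s Hs) as [L0 L1].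
  cbn [sumK]; rewrite (proj1 (wsu_update2_arm0 e g (two_phase T) s q)),
    (proj1 (wsu_update2_arm1 e g (two_phase T) s q)), !mix2, L0, L1.
  set (z := q 0%nat) in *; replace (q 1%nat) with (1 - z) by lra.
  assert (0 < pmix g (1 - z)) by (unfold pmix; nra).
  replace (z * (1 + e * (1 / ((1 - g) * (1 - z) + g / 2)) * (1 - z))) with (phase2_move e g z)
    by (unfold phase2_move, pmix in *; field; lra).
  replace (z * (1 - e * (0 / ((1 - g) * z + g / 2)) * (1 - z))) with z
    by (unfold Rdiv; ring).
  unfold pmix; field.
Qed.

End TwoPhaseRound.

Lemma exp_loss_two_phase_ge (e g : R) (T : nat) : 0 < e -> 0 < g < 1 / 2 -> 4 * e <= g ->
  potential e g T 1 (1 / 2) <= exp_loss 2 e g (two_phase T) T 1 (fun _ => 1 / INR 2).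
Proof.
  intros He Hg Heg.
  replace (1 / 2) with (1 / INR 2) by (simpl; field).
  refine (exp_loss_ge_potential 2 e g (two_phase T) interior2 _ _
            (fun s q => potential e g T s (q 0%nat)) T 1 _ _ _ _).
  - intros p a [H0 [H1 _]] Ha; rewrite mix2.
    assert (0 < p a) by (destruct a as [|[|]]; auto; lia). nra.
  - intros t p a Hp Ha; apply interior2_update; auto; try lra; apply two_phase_unit.
  - intros s q Hq Hs; cbv beta.
    assert (Hz : 0 < q 0%nat < 1) by (destruct Hq as [? [? ?]]; lra).
    destruct (Nat.le_gt_cases s (T / 100)) as [Hph|Hph].
    + rewrite (round_phase1 e g T s q (potential e g T (S s))) by (auto; lra).
      apply potential_step_phase1; auto.
    + rewrite (round_phase2 e g T s q (potential e g T (S s))) by (auto; lra).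
      apply potential_step_phase2; auto; lia.
  - intros q _; cbv beta; rewrite potential_phase2 by (pose proof (div100_le T); lia).
    replace (T + 1 - (1 + T))%nat with 0%nat by lia.
    unfold phase2_pot; simpl; lra.
  - unfold interior2; simpl; lra.
Qed.

Lemma exp_regret_two_phase_ge (e g : R) (T : nat) : 0 < e -> 0 < g < 1 / 2 -> 4 * e <= g ->
  potential e g T 1 (1 / 2) - INR (T / 100) <= exp_regret 2 e g (two_phase T) T.
Proof.
  intros He Hg Heg; unfold exp_regret.
  pose proof (exp_loss_two_phase_ge e g T He Hg Heg).
  assert (minK 2 (fun i => sumK T (fun s => two_phase T (S s) i)) <= INR (T / 100)).
  { simpl minK; eapply Rle_trans; [apply Rmin_l|].
    rewrite two_phase_arm0_total, Nat.min_r by apply div100_le; lra. }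
  lra.
Qed.

Lemma bonus_sum_ge (c0 a : R) (k m : nat) : 0 <= a ->
  INR (k + m) * c0 + INR m * a <= discounted_sum 1 (fun i => c0 + bonus k i * a) (k + m) 1.
Proof.
  intros Ha; rewrite discounted_sum_add, pow1, plus_INR.
  assert (INR k * c0 <= discounted_sum 1 (fun i => c0 + bonus k i * a) k 1).
  { apply discounted_sum_1_ge; intros i _; pose proof (bonus_unit k i); nra. }
  assert (INR m * (c0 + a) <= discounted_sum 1 (fun i => c0 + bonus k i * a) m (k + 1)).
  { apply discounted_sum_1_ge; intros i Hi; unfold bonus.
    rewrite (proj2 (Nat.ltb_lt _ _)) by lia; lra. }
  lra.
Qed.

Lemma bonus_discounted_sum_le (rho beta : R) (k m : nat) : 0 <= rho < 1 -> 0 <= beta ->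
  discounted_sum rho (fun i => bonus k i * beta) (k + m) 1 <= rho ^ k * (beta / (1 - rho)).
Proof.
  intros Hrho Hbeta; rewrite discounted_sum_add, discounted_sum_zero, Rplus_0_l.
  - apply Rmult_le_compat_l; [apply pow_le; lra|].
    apply discounted_sum_le; auto; intros i; pose proof (bonus_unit k i); nra.
  - intros i Hi; unfold bonus; rewrite (proj2 (Nat.ltb_ge _ _)) by lia; ring.
Qed.

Lemma potential_start_ge (e g : R) (T : nat) :
  0 < e -> 0 < g < 1 / 2 -> 4 * e <= g -> (1 <= T / 100)%nat ->
  let T1 := (T / 100)%nat in let k := (T1 / 2)%nat in
  e / (54 * g) * INR (T1 - k) - (1 - e / 2) ^ k / (27 * g * g)
  - 2 * ((1 + 2 * e) ^ T1 * (1 - e) ^ (T - T1) / e)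
  + (g * INR (T - T1) / 2 - g * INR T1 / 2 - e * INR T1)
  <= potential e g T 1 (1 / 2) - INR T1.
Proof.
  intros He Hg Heg HT1 T1 k.
  assert (Hk : (k <= T1)%nat) by (apply Nat.Div0.div_le_upper_bound; lia).
  rewrite potential_phase1 by lia; unfold phase1_potential, phase1_pot; fold T1 k.
  replace (S (T1 - 1)) with T1 by lia.
  pose proof (bonus_sum_ge (1 - g / 2 - e) (e / (54 * g)) k (T1 - k)
                ltac:(apply Rle_mult_inv_pos; lra)) as HC.
  pose proof (bonus_discounted_sum_le (1 - e / 2) (e / (54 * g * g)) k (T1 - k)
                ltac:(lra) ltac:(apply Rle_mult_inv_pos; nra)) as HB.
  replace (k + (T1 - k))%nat with T1 in HC, HB by lia.
  replace (e / (54 * g * g) / (1 - (1 - e / 2))) with (1 / (27 * g * g)) in HB by (field; lra).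
  set (P := (1 + 2 * e) ^ T1); set (Q := (1 - e) ^ (T - T1)).
  assert (HP : 0 <= P) by (apply pow_le; lra); assert (HQ : 0 <= Q) by (apply pow_le; lra).
  assert (HD : P * ((1 - g) * (1 - e) / e * Q) <= P * Q / e).
  { replace (P * ((1 - g) * (1 - e) / e * Q)) with ((1 - g) * (1 - e) * (P * Q / e))
      by (field; lra).
    assert (0 <= P * Q / e) by (apply Rle_mult_inv_pos; [apply Rmult_le_pos|]; lra).
    assert ((1 - g) * (1 - e) <= 1) by nra. nra. }
  assert (Hln : 0 <= (1 - g) * (1 - e) / e * - ln (1 / 2)).
  { apply Rmult_le_pos; [apply Rle_mult_inv_pos; nra|].
    pose proof (ln_increasing (1 / 2) 1 ltac:(lra) ltac:(lra)); rewrite ln_1 in *; lra. }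
  replace (1 / 2 / (1 - 1 / 2)) with 1 by field.
  replace (P * ((1 - g) * (1 - e) / e * Q) / (1 / 2)) with (2 * (P * ((1 - g) * (1 - e) / e * Q)))
    by (field; lra).
  lra.
Qed.

Lemma exp_pow (x : R) (m : nat) : exp x ^ m = exp (INR m * x).
Proof.
  induction m as [|m IH]; [simpl; rewrite Rmult_0_l, exp_0; auto|].
  rewrite <- tech_pow_Rmult, IH, <- exp_plus, S_INR; f_equal; ring.
Qed.

Lemma pow5_le_exp (y : R) : 0 <= y -> (y / 5) ^ 5 <= exp y.
Proof.
  intros Hy; replace (exp y) with (exp (y / 5) ^ 5) by (rewrite exp_pow; f_equal; simpl; field).
  apply pow_incr; pose proof (exp_ineq1_le (y / 5)); lra.
Qed.

Lemma one_sub_pow_le (a : R) (m : nat) : 0 < a < 1 -> (0 < m)%nat ->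
  (1 - a) ^ m <= / (a * INR m / 5) ^ 5.
Proof.
  intros Ha Hm; assert (0 < INR m) by (apply lt_0_INR; auto).
  apply Rle_trans with (exp (- a) ^ m).
  { apply pow_incr; pose proof (exp_ineq1_le (- a)); lra. }
  rewrite exp_pow, <- Ropp_mult_distr_r, Rmult_comm, exp_Ropp.
  apply Rinv_le_contravar; [apply pow_lt; apply Rdiv_lt_0_compat; nra|].
  apply pow5_le_exp; nra.
Qed.

Lemma Rpower_cube_root (x : R) : 0 < x ->
  let tau := Rpower x (1 / 3) in
  0 < tau /\ tau ^ 3 = x /\ Rpower x (2 / 3) = tau ^ 2 /\
  Rpower x (- (2 / 3)) = / tau ^ 2 /\ Rpower x (- (1 / 3)) = / tau.
Proof.
  intros Hx tau.
  assert (Hpow : forall n : nat, Rpower x (1 / 3 * INR n) = tau ^ n)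
    by (intros n; rewrite <- Rpower_mult; apply Rpower_pow, exp_pos).
  split; [apply exp_pos|].
  rewrite !Rpower_Ropp, <- !Hpow.
  repeat split; try (f_equal; simpl; field); try (do 2 f_equal; simpl; field).
  replace (1 / 3 * INR 3) with 1 by (simpl; field); apply Rpower_1; auto.
Qed.

Lemma cube_ge_inv (a x : R) : 0 <= x -> a ^ 3 <= x ^ 3 -> a <= x.
Proof.
  intros Hx Hax; destruct (Rle_or_lt a x) as [|Hxa]; auto.
  assert (0 < (a - x) * (a * a + a * x + x * x)) by (apply Rmult_lt_0_compat; nra).
  simpl in Hax; nra.
Qed.

Section Asymptotics.

Variables (tau e g : R) (T1 k : nat).
Hypotheses (Htau : 10 ^ 7 <= tau) (HT1 : INR T1 = tau ^ 3 / 100)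
  (Hk1 : INR T1 <= 2 * INR k + 1) (Hk2 : INR T1 <= 2 * INR (T1 - k))
  (He : / tau ^ 2 <= e) (Hg : g <= / tau) (Heg : 4 * e <= g) (Hg1 : g < 1 / 2).

Lemma tau_pos : 0 < tau.
Proof. pose proof (pow_lt 10 7 ltac:(lra)); lra. Qed.

Lemma e_pos : 0 < e.
Proof. pose proof (pow_lt tau 2 tau_pos); pose proof (Rinv_0_lt_compat _ H); lra. Qed.

Lemma e_tau_ge (x : R) : 0 <= x -> x / tau ^ 2 <= e * x.
Proof.
  intros Hx; pose proof tau_pos.
  unfold Rdiv; rewrite Rmult_comm; apply Rmult_le_compat_r; lra.
Qed.

Lemma bonus_gain_ge : tau ^ 2 / 10800 <= e / (54 * g) * INR (T1 - k).
Proof.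
  pose proof tau_pos; pose proof e_pos.
  assert (Hetau : g <= e * tau).
  { pose proof (e_tau_ge tau ltac:(lra)).
    replace (tau / tau ^ 2) with (/ tau) in * by (field; lra); lra. }
  apply Rle_trans with (e / (54 * g) * (tau ^ 3 / 200)).
  - apply Rmult_le_reg_r with (10800 * g); [lra|].
    replace (tau ^ 2 / 10800 * (10800 * g)) with (tau ^ 2 * g) by field.
    replace (e / (54 * g) * (tau ^ 3 / 200) * (10800 * g)) with (tau ^ 2 * (e * tau))
      by (field; lra).
    apply Rmult_le_compat_l; [apply pow_le|]; lra.
  - apply Rmult_le_compat_l; [apply Rle_mult_inv_pos; lra | lra].
Qed.

Lemma tau_cube_ge : 10 ^ 21 <= tau ^ 3.
Proof.
  replace (10 ^ 21) with ((10 ^ 7) ^ 3) by ring.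
  apply pow_incr; pose proof (pow_lt 10 7 ltac:(lra)); lra.
Qed.

Lemma odds_coeff_le : (1 - e / 2) ^ k / (27 * g * g) <= tau ^ 2 / 43200.
Proof.
  pose proof tau_pos; pose proof e_pos; pose proof tau_cube_ge.
  assert (Hk : tau ^ 3 / 400 <= INR k) by lra.
  assert (Hk0 : (0 < k)%nat) by (destruct k; [simpl in Hk; lra | lia]).
  assert (Hdecay : (1 - e / 2) ^ k <= / (tau / 4000) ^ 5).
  { eapply Rle_trans; [apply one_sub_pow_le; auto; lra|].
    apply Rinv_le_contravar; [apply pow_lt; lra|]; apply pow_incr.
    pose proof (e_tau_ge (tau ^ 3 / 400) ltac:(lra)).
    replace (tau ^ 3 / 400 / tau ^ 2) with (tau / 400) in * by (field; lra).
    assert (e * (tau ^ 3 / 400) <= e * INR k) by (apply Rmult_le_compat_l; lra).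
    lra. }
  assert (Hgg : / (27 * g * g) <= tau ^ 4 / 432).
  { pose proof (e_tau_ge 4 ltac:(lra)).
    assert (0 < 4 / tau ^ 2) by (apply Rdiv_lt_0_compat; [lra | apply pow_lt; lra]).
    replace (tau ^ 4 / 432) with (/ (27 * (4 / tau ^ 2) * (4 / tau ^ 2))) by (field; lra).
    apply Rinv_le_contravar; nra. }
  unfold Rdiv at 1.
  eapply Rle_trans.
  { apply Rmult_le_compat; [apply pow_le; lra | left; apply Rinv_0_lt_compat; nra | |];
      eassumption. }
  replace (/ (tau / 4000) ^ 5 * (tau ^ 4 / 432)) with (4000 ^ 5 / (432 * tau)) by (field; lra).
  apply Rmult_le_reg_r with (432 * tau * 43200); [nra|].
  replace (4000 ^ 5 / (432 * tau) * (432 * tau * 43200)) with (4000 ^ 5 * 43200) by (field; lra).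
  replace (tau ^ 2 / 43200 * (432 * tau * 43200)) with (432 * tau ^ 3) by (field; lra).
  lra.
Qed.

Lemma initial_inv_coeff_le : 2 * ((1 + 2 * e) ^ T1 * (1 - e) ^ (99 * T1) / e) <= 1.
Proof.
  pose proof tau_pos; pose proof e_pos; pose proof tau_cube_ge.
  assert (He1 : e < 1) by lra.
  assert (HT1pos : (0 < 97 * T1)%nat) by (apply (INR_lt 0); rewrite mult_INR; simpl; lra).
  replace (99 * T1)%nat with (2 * T1 + 97 * T1)%nat by lia.
  rewrite pow_add, pow_mult.
  assert (Hpair : (1 + 2 * e) ^ T1 * ((1 - e) ^ 2) ^ T1 <= 1).
  { rewrite <- Rpow_mult_distr; apply Rle_trans with (1 ^ T1); [|rewrite pow1; lra].
    apply pow_incr; split; [nra|].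
    assert (0 <= e * e * (3 - 2 * e)) by (apply Rmult_le_pos; nra). nra. }
  assert (Hdecay : (1 - e) ^ (97 * T1) <= / (tau / 6) ^ 5).
  { eapply Rle_trans; [apply one_sub_pow_le; auto; lra|].
    apply Rinv_le_contravar; [apply pow_lt; lra|]; apply pow_incr.
    rewrite mult_INR; replace (INR 97) with 97 by (simpl; lra).
    pose proof (e_tau_ge (97 * INR T1) ltac:(lra)).
    replace (97 * INR T1 / tau ^ 2) with (97 * tau / 100) in * by (rewrite HT1; field; lra).
    lra. }
  assert (Hinv : / e <= tau ^ 2).
  { replace (tau ^ 2) with (/ / tau ^ 2) by (field; lra).
    apply Rinv_le_contravar; auto; apply Rinv_0_lt_compat, pow_lt; lra. }
  set (P := (1 + 2 * e) ^ T1 * ((1 - e) ^ 2) ^ T1) in *; set (Q := (1 - e) ^ (97 * T1)) in *.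
  assert (0 <= P) by (apply Rmult_le_pos; apply pow_le; nra).
  assert (0 <= Q) by (apply pow_le; lra).
  replace ((1 + 2 * e) ^ T1 * (((1 - e) ^ 2) ^ T1 * Q) / e) with (P * (Q * / e))
    by (unfold P; field; lra).
  assert (HQ : Q * / e <= / (tau / 6) ^ 5 * tau ^ 2)
    by (apply Rmult_le_compat; auto; left; apply Rinv_0_lt_compat; lra).
  replace (/ (tau / 6) ^ 5 * tau ^ 2) with (7776 / tau ^ 3) in HQ by (field; lra).
  assert (7776 / tau ^ 3 <= 1 / 2).
  { apply Rmult_le_reg_r with (tau ^ 3); [apply pow_lt; lra|].
    replace (7776 / tau ^ 3 * tau ^ 3) with 7776 by (field; lra). lra. }
  assert (0 <= Q * / e) by (apply Rmult_le_pos; [auto | left; apply Rinv_0_lt_compat; lra]).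
  nra.
Qed.

Lemma exploration_cost_nonneg : 0 <= g * INR (99 * T1) / 2 - g * INR T1 / 2 - e * INR T1.
Proof.
  pose proof e_pos; rewrite mult_INR.
  assert (0 <= INR T1) by apply pos_INR.
  replace (INR 99) with 99 by (simpl; lra). nra.
Qed.

Lemma regret_terms_ge :
  tau ^ 2 / 21600
  <= e / (54 * g) * INR (T1 - k) - (1 - e / 2) ^ k / (27 * g * g)
     - 2 * ((1 + 2 * e) ^ T1 * (1 - e) ^ (99 * T1) / e)
     + (g * INR (99 * T1) / 2 - g * INR T1 / 2 - e * INR T1).
Proof.
  pose proof bonus_gain_ge; pose proof odds_coeff_le.
  pose proof initial_inv_coeff_le; pose proof exploration_cost_nonneg.
  assert (10 ^ 7 * 10 ^ 7 <= tau * tau) by (pose proof (pow_lt 10 7); nra).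
  replace (tau ^ 2) with (tau * tau) in * by ring.
  lra.
Qed.

End Asymptotics.

Lemma valid2_ratio (e g : R) : valid 2 e g -> 4 * e <= g.
Proof.
  intros [He [Hg Hr]]; simpl INR in Hr.
  apply Rmult_le_reg_r with (/ g); [apply Rinv_0_lt_compat; lra|].
  replace (e * (1 + 1) / g) with (2 * (e * / g)) in Hr by (field; lra).
  replace (g * / g) with 1 by (field; lra); lra.
Qed.

Lemma horizon_split (T : nat) : (T mod 100 = 0)%nat ->
  let T1 := (T / 100)%nat in let k := (T1 / 2)%nat in
  INR T = 100 * INR T1 /\ (T - T1 = 99 * T1)%nat /\
  INR T1 <= 2 * INR k + 1 /\ INR T1 <= 2 * INR (T1 - k).
Proof.
  intros HT T1 k.
  pose proof (Nat.div_mod_eq T 100) as H100; rewrite HT in H100; fold T1 in H100.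
  pose proof (Nat.div_mod_eq T1 2) as H2; fold k in H2.
  pose proof (Nat.mod_upper_bound T1 2 ltac:(lia)).
  replace 2 with (INR 2) by (simpl; lra); replace 100 with (INR 100) by (simpl; lra).
  rewrite <- !mult_INR, <- S_INR.
  split; [f_equal; lia|]; repeat split; try apply le_INR; lia.
Qed.

Theorem theorem2 :
  forall eta gamma : nat -> R,
    (forall T : nat, (0 < T)%nat -> (T mod 100 = 0)%nat ->
       valid 2 (eta T) (gamma T) /\
       Rpower (INR T) (- (2 / 3)) <= eta T /\
       gamma T <= Rpower (INR T) (- (1 / 3))) ->
    exists c : R, 0 < c /\
    exists T0 : nat, forall T : nat,
      (T0 <= T)%nat -> (0 < T)%nat -> (T mod 100 = 0)%nat ->
      c * Rpower (INR T) (2 / 3) <= exp_regret 2 (eta T) (gamma T) (two_phase T) T.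
Proof.
  intros eta gamma Hparam.
  exists (1 / 21600); split; [lra|].
  exists (Nat.pow 10 21); intros T HT0 HT HTm.
  destruct (Hparam T HT HTm) as [Hvalid [Heta Hgamma]].
  pose proof (valid2_ratio _ _ Hvalid) as Heg; destruct Hvalid as [He [Hg _]].
  destruct (Rpower_cube_root (INR T) (lt_0_INR _ HT)) as [Htau [Hcube [-> [Hm2 Hm1]]]].
  rewrite Hm2 in Heta; rewrite Hm1 in Hgamma.
  set (tau := Rpower (INR T) (1 / 3)) in *.
  destruct (horizon_split T HTm) as [HT100 [Hn2 Hk]].
  assert (HTbig : 10 ^ 21 <= INR T).
  { replace 10 with (INR 10) by (simpl; lra); rewrite <- pow_INR; apply le_INR; exact HT0. }
  assert (Htau7 : 10 ^ 7 <= tau)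
    by (apply cube_ge_inv; [lra|]; rewrite Hcube, <- pow_mult; exact HTbig).
  eapply Rle_trans; [|apply exp_regret_two_phase_ge; lra].
  eapply Rle_trans; [|apply potential_start_ge; try lra].
  - rewrite Hn2; replace (1 / 21600 * tau ^ 2) with (tau ^ 2 / 21600) by field.
    apply regret_terms_ge; try lra; tauto.
  - apply (INR_le 1); change (INR 1) with 1; lra.
Qed.
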